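(* For any hypothesis class $\mathcal{H}$ with $|\mathcal{H}|<\infty$ and any integer $k\ge0$, \[ \mathrm{ELdim}(\mathcal{H},k)\le\max\Big\{t:\binom{t}{\le k+1}\le|\mathcal{H}|\Big\}. \]
   Context: Hypotheses are maps $\mathcal{X}\to\{-1,+1\}$; $\binom{t}{\le j}=\sum_{i=0}^{j}\binom{t}{i}$. Extended mistake tree w.r.t. $\mathcal{H}$: a finite full binary tree (possibly a single leaf) in which each internal node $v$ is labeled by $x_v\in\mathcal{X}$ and has two solid downward edges, to its left child (label $-1$) and right child (label $+1$), plus one dashed downward edge to one of its two children; each leaf is labeled by some $h\in\mathcal{H}$ with $h(x_v)$ equal to the direction label at every internal node $v$ on the root-to-leaf path. A root-to-leaf path chooses at each internal node one downward edge; its length is its number of edges. The tree is $(k,m)$-difficult if every root-to-leaf path using at most $k$ solid edges has length at least $m$. $\mathrm{ELdim}(\mathcal{H},k)$ is the supremum of $m$ such that a $(k,m)$-difficult extended mistake tree w.r.t. $\mathcal{H}$ exists. *)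

From mathcomp Require Import all_boot.
Set Implicit Arguments. Unset Strict Implicit. Unset Printing Implicit Defensive.

(* Hypothesis class H: a finite index type I with an injective labelling
   f : I -> (X -> bool); H = range f, |H| = #|I|.  Labels: true = +1, false = -1. *)

(* Extended mistake tree: leaves carry (the index of) a hypothesis; an internal
   node carries x_v, its left child (label -1), right child (label +1), and a bit
   d saying whether the dashed edge goes to the right (true) or left (false) child. *)
Inductive emtree (X I : Type) : Type :=
  | Leaf of I
  | Node of X & bool & emtree X I & emtree X I.
Arguments Leaf {X I} _.
Arguments Node {X I} _ _ _ _.

(* Well-formedness w.r.t. H: every leaf hypothesis h satisfies h(x_v) = direction
   label at each internal node v on its root-to-leaf path. [path] accumulates
   the constraints (x_v, direction) from the root. *)
Fixpoint emtree_wf_aux (X : Type) (I : Type) (f : I -> X -> bool)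
    (path : seq (X * bool)) (t : emtree X I) : Prop :=
  match t with
  | Leaf i => foldr (fun p P => f i p.1 = p.2 /\ P) True path
  | Node x _ l r => emtree_wf_aux f ((x, false) :: path) l /\
                    emtree_wf_aux f ((x, true) :: path) r
  end.

Definition emtree_wf (X I : Type) (f : I -> X -> bool) (t : emtree X I) : Prop :=
  emtree_wf_aux f [::] t.

Inductive edge := Dashed | SolidL | SolidR.

Definition is_solid (e : edge) : bool :=
  match e with Dashed => false | _ => true end.

Fixpoint is_rtl_path (X I : Type) (t : emtree X I) (p : seq edge) : bool :=
  match t, p with
  | Leaf _, [::] => true
  | Leaf _, _ :: _ => false
  | Node _ _ _ _, [::] => false
  | Node _ d l r, e :: p' =>
      match e with
      | Dashed => is_rtl_path (if d then r else l) p'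
      | SolidL => is_rtl_path l p'
      | SolidR => is_rtl_path r p'
      end
  end.

Definition difficult (X I : Type) (k m : nat) (t : emtree X I) : Prop :=
  forall p, is_rtl_path t p -> count is_solid p <= k -> m <= size p.

Definition binom_le (t j : nat) : nat := \sum_(i < j.+1) 'C(t, i).

From mathcomp Require Import all_boot.

Set Implicit Arguments.
Unset Strict Implicit.
Unset Printing Implicit Defensive.

(* Count the hypotheses at the leaves.  At a node labelled x the leaves of the
   left subtree satisfy h(x) = -1 and those of the right subtree h(x) = +1, so
   the two subtrees carry disjoint sets of hypotheses.  A (k, m+1)-difficult
   tree has a (k, m)-difficult dashed child and a (k-1, m)-difficult solid
   child, so by Pascal's rule binom(m+1, <= k+1) = binom(m, <= k+1) +
   binom(m, <= k) it carries at least binom(m, <= k+1) distinct hypotheses. *)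

Fixpoint leafset (X : Type) (I : finType) (t : emtree X I) : {set I} :=
  match t with
  | Leaf i => [set i]
  | Node _ _ l r => leafset l :|: leafset r
  end.

Lemma leafset_gt0 (X : Type) (I : finType) (t : emtree X I) :
  0 < #|leafset t|.
Proof.
elim: t => [i|x d l IHl r _] /=; first by rewrite cards1.
exact: leq_trans IHl (subset_leq_card (subsetUl _ _)).
Qed.

Section WellFormed.

Variables (X : Type) (I : finType) (f : I -> X -> bool).

Lemma wf_leafset_constraints (t : emtree X I) (p : seq (X * bool)) (i : I) :
  emtree_wf_aux f p t -> i \in leafset t ->
  foldr (fun c P => f i c.1 = c.2 /\ P) True p.
Proof.
elim: t p => [j|x d l IHl r IHr] p /=; first by move=> wf /set1P ->.
by case=> wfl wfr /setUP[/(IHl _ wfl)|/(IHr _ wfr)] [].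
Qed.

Lemma card_leafset_Node (p : seq (X * bool)) x d (l r : emtree X I) :
  emtree_wf_aux f p (Node x d l r) ->
  #|leafset (Node x d l r)| = #|leafset l| + #|leafset r|.
Proof.
case=> wfl wfr; apply/eqP; rewrite (leq_card_setU _ _).2 disjoints_subset.
apply/subsetP => i il; rewrite inE; apply/negP => ir.
have [fl _] := wf_leafset_constraints wfl il.
by have [] := wf_leafset_constraints wfr ir; rewrite fl.
Qed.

End WellFormed.

Lemma binom_le0 t : binom_le t 0 = 1.
Proof. by rewrite /binom_le big_ord1 bin0. Qed.

Lemma binom_le0n j : binom_le 0 j = 1.
Proof.
by rewrite /binom_le big_ord_recl bin0 big1 // => i _; rewrite bin0n.
Qed.

Lemma binom_leS t j : binom_le t.+1 j.+1 = binom_le t j.+1 + binom_le t j.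
Proof.
rewrite /binom_le big_ord_recl (big_ord_recl j.+1) !bin0.
under eq_bigr => i _ do rewrite /bump /= binS.
by rewrite big_split addnA.
Qed.

Section Difficult.

Variables (X : Type) (I : finType) (x : X) (d : bool) (l r : emtree X I).

Lemma difficult_dashed k m :
  difficult k m.+1 (Node x d l r) -> difficult k m (if d then r else l).
Proof. by move=> hard q q_rtl q_k; apply: (hard (Dashed :: q)). Qed.

Lemma difficult_solid k m :
  difficult k.+1 m.+1 (Node x d l r) -> difficult k m l /\ difficult k m r.
Proof.
by move=> hard; split=> q q_rtl q_k; [apply: (hard (SolidL :: q))
                                     | apply: (hard (SolidR :: q))].
Qed.

End Difficult.

Lemma binom_le_card_leafset (X : Type) (I : finType) (f : I -> X -> bool)
    (t : emtree X I) (p : seq (X * bool)) (k m : nat) :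
  emtree_wf_aux f p t -> difficult k m t -> binom_le m k.+1 <= #|leafset t|.
Proof.
elim: t p k m => [i|x d l IHl r IHr] p k m wf hard.
  have := hard [::] erefl (leq0n _); rewrite leqn0 => /eqP ->.
  by rewrite binom_le0n cards1.
case: m hard => [|m] hard; first by rewrite binom_le0n leafset_gt0.
have [wfl wfr] := wf.
have dashed := difficult_dashed hard.
rewrite (card_leafset_Node wf) binom_leS {wf}.
case: k hard dashed => [|k] hard dashed.
  rewrite binom_le0; case: d {hard} dashed => dashed.
    by rewrite addnC leq_add ?leafset_gt0 // (IHr _ _ _ wfr).
  by rewrite leq_add ?leafset_gt0 // (IHl _ _ _ wfl).
have [solidl solidr] := difficult_solid hard.
case: d {hard} dashed => dashed.
  by rewrite addnC leq_add ?(IHr _ _ _ wfr) ?(IHl _ _ _ wfl).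
by rewrite leq_add ?(IHr _ _ _ wfr) ?(IHl _ _ _ wfl).
Qed.

Theorem mainTheorem8 (X : Type) (I : finType) (f : I -> X -> bool)
    (f_inj : injective f) (k : nat) :
  forall (m : nat) (T : emtree X I),
    emtree_wf f T -> difficult k m T ->
    exists t : nat, binom_le t k.+1 <= #|I| /\ m <= t.
Proof.
move=> m T wf hard; exists m; split=> //.
exact: leq_trans (binom_le_card_leafset wf hard) (max_card _).
Qed.
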